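(* For $j,k\in\mathbb{N}$ let $$R_{jk}=2^{3/2}\int_0^1\sin\Big(\frac{\pi x}{2}\Big)^{1/2}\sin(j\pi x)\sin(k\pi x)\,\mathrm{d}x,\qquad S_{jk}=\int_0^1\sin\Big(\frac{\pi x}{2}\Big)^{-1}\sin(j\pi x)\sin(k\pi x)\,\mathrm{d}x.$$ Let $n\in\mathbb{N}\setminus\{1\}$ and $j,k\in\{1,\dots,n\}$. Then: (i) $R_{jj}>0$, $R_{jk}<0$ if $j\ne k$, and $|R_{jk}|\le2\sqrt2$; (ii) $R_{n,n-1}$ is a decreasing function of $n\in\mathbb{N}\setminus\{1\}$; (iii) $2\sum_{k=1}^{n-1}R_{kn}\ge-R_{nn}$; (iv) $S_{jk}>\frac1\pi\log\Big(\frac{j+k+\frac12}{|j-k|+\frac12}\Big)>0$; (v) $S_{jk}<\frac1\pi\log\Big(\frac{j+k-\frac12}{|j-k|-\frac12}\Big)$ for $j\ne k$, and $S_{jj}<\frac2\pi+\frac1\pi\log(4j-1)$; (vi) $S_{jn}$ is an increasing function of $j$ for $1\le j\le n$. *)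

From Stdlib Require Import Reals Lra Lia.
From Coquelicot Require Import Coquelicot.
Open Scope R_scope.

Definition Rjk (j k : nat) : R :=
  Rpower 2 (3/2) *
  RInt (fun x => sqrt (sin (PI * x / 2)) * sin (INR j * PI * x) * sin (INR k * PI * x)) 0 1.

Definition Sjk (j k : nat) : R :=
  RInt (fun x => / sin (PI * x / 2) * sin (INR j * PI * x) * sin (INR k * PI * x)) 0 1.

(* With d = |j - k|, product-to-sum gives sin(jπx) sin(kπx) = (cos(dπx) - cos((j+k)πx))/2.
   Divided by sin(πx/2), this difference of cosines telescopes into the sines sin((m+1/2)πx),
   d <= m < j+k, whose integrals are 1/((m+1/2)π); so π S_jk is a sum of the 1/(m+1/2), and the
   tangent-line bound ln(b/a) < b/a - 1 squeezes it between two logarithms.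
   Multiplied instead by sin(πx/2)^(1/2), it gives R_jk = √2 (I_d - I_(j+k)), where I_m is the
   m-th cosine moment of sin(πx/2)^(1/2). Integrating the derivative of
   sin(πx/2)^(3/2) cos((m+1/2)πx), which vanishes at both ends, yields
   (m + 5/4) I_(m+1) = (m - 1/4) I_m. Hence I_0 > 0, I_1 = -I_0/5, the I_m (m >= 1) are negative
   and increasing, and I_0 + 2(I_1 + ... + I_M) = -(4M - 1) I_M > 0. *)

From Stdlib Require Import Reals Lra Lia.
From Coquelicot Require Import Coquelicot.
Open Scope R_scope.

Lemma sum_f_R0_telescope (g : nat -> R) (N : nat) :
  sum_f_R0 (fun i => g (S i) - g i) N = g (S N) - g O.
Proof. induction N as [|N IH]; simpl; [|rewrite IH]; ring. Qed.

Lemma sum_f_R0_lt (f g : nat -> R) (N : nat) :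
  (forall i, (i <= N)%nat -> f i < g i) -> sum_f_R0 f N < sum_f_R0 g N.
Proof.
  intros Hfg. apply Rlt_0_minus. rewrite <- minus_sum.
  apply tech1. intros i Hi. specialize (Hfg i Hi). lra.
Qed.

Lemma is_RInt_sum_f_R0 (f : nat -> R -> R) (v : nat -> R) (a b : R) (N : nat) :
  (forall i, is_RInt (f i) a b (v i)) ->
  is_RInt (fun x => sum_f_R0 (fun i => f i x) N) a b (sum_f_R0 v N).
Proof.
  intros Hf. induction N as [|N IH]; [exact (Hf O)|].
  exact (is_RInt_plus (V := R_NormedModule) _ _ _ _ _ _ IH (Hf (S N))).
Qed.

Lemma continuous_Rmult (f g : R -> R) (x : R) :
  continuous f x -> continuous g x -> continuous (fun y => f y * g y) x.
Proof. exact (@continuous_mult R_UniformSpace R_AbsRing f g x). Qed.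

Lemma continuous_Rplus (f g : R -> R) (x : R) :
  continuous f x -> continuous g x -> continuous (fun y => f y + g y) x.
Proof. exact (@continuous_plus R_UniformSpace R_AbsRing R_NormedModule f g x). Qed.

Lemma continuous_comp_scal (f : R -> R) (c x : R) :
  (forall y, continuous f y) -> continuous (fun y => f (c * y)) x.
Proof.
  intros Hf. apply (continuous_comp (fun y => c * y) f).
  - apply continuous_Rmult; [apply continuous_const | apply continuous_id].
  - apply Hf.
Qed.

Lemma derivable_pt_lim_mult_vanishing (f g : R -> R) (x l : R) :
  f x = 0 -> derivable_pt_lim f x l -> continuity_pt g x ->
  derivable_pt_lim (fun y => f y * g y) x (l * g x).
Proof.
  intros Hf0 Hf Hg. apply uniqueness_step3.
  assert (Hgh : limit1_in (fun h => g (x + h)) (fun h => h <> 0) (g x) 0).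
  { intros eps Heps. destruct (Hg eps Heps) as [del [Hdel Hy]].
    exists del. split; [exact Hdel|]. intros h [Hh0 Hh]. apply Hy. split.
    - split; [exact I|]. intros E. apply Hh0. lra.
    - simpl in *. unfold R_dist in *. now replace (x + h - x) with (h - 0) by ring. }
  pose proof (limit_mul _ _ _ _ _ _ (uniqueness_step2 _ _ _ Hf) Hgh) as Hlim.
  intros eps Heps. destruct (Hlim eps Heps) as [del [Hdel Hy]].
  exists del. split; [exact Hdel|]. intros h Hh. specialize (Hy h Hh).
  simpl in *. rewrite Hf0 in *.
  now replace ((f (x + h) * g (x + h) - 0 * g x) / h) with ((f (x + h) - 0) / h * g (x + h))
    by (field; apply Hh).
Qed.

Lemma ln_sub_lt_tangent (a b : R) : 0 < a -> 0 < b -> a <> b -> ln b - ln a < (b - a) / a.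
Proof.
  intros Ha Hb Hab. rewrite <- ln_div by assumption.
  assert (Hba : b / a <> 1).
  { intros E. apply Hab. apply (f_equal (fun t => t * a)) in E. field_simplify in E; lra. }
  pose proof (exp_ineq1 _ (ln_neq_0 _ Hba (Rdiv_lt_0_compat _ _ Hb Ha))) as H.
  rewrite exp_ln in H by (apply Rdiv_lt_0_compat; assumption).
  replace ((b - a) / a) with (b / a - 1) by (field; lra). lra.
Qed.

(** * The sums S_jk *)

Lemma cos_INR_half_mult_PI (n : nat) : cos ((INR n + 1/2) * PI) = 0.
Proof. apply cos_eq_0_1. exists (Z.of_nat n). rewrite <- INR_IZR_INZ. field. Qed.

Definition nat_dist (j k : nat) : nat := (j - k) + (k - j).

Lemma INR_nat_dist (j k : nat) : INR (nat_dist j k) = Rabs (INR j - INR k).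
Proof.
  unfold nat_dist. destruct (Nat.le_ge_cases j k) as [H|H]; apply le_INR in H as H'.
  - replace (j - k)%nat with O by lia. rewrite Nat.add_0_l, minus_INR by exact H.
    rewrite Rabs_minus_sym, Rabs_right; lra.
  - replace (k - j)%nat with O by lia. rewrite Nat.add_0_r, minus_INR by exact H.
    rewrite Rabs_right; lra.
Qed.

Lemma sin_mul_sin_INR (j k d : nat) (t : R) : INR d = Rabs (INR j - INR k) ->
  sin (INR j * t) * sin (INR k * t) = (cos (INR d * t) - cos (INR (j + k) * t)) / 2.
Proof.
  intros Hd. rewrite plus_INR, Rmult_plus_distr_r, cos_plus.
  replace (cos (INR d * t)) with (cos (INR j * t - INR k * t)).
  - rewrite cos_minus. field.
  - rewrite Hd. unfold Rabs. destruct (Rcase_abs (INR j - INR k)).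
    + rewrite <- cos_neg. f_equal. ring.
    + f_equal. ring.
Qed.

Lemma cos_sub_cos_succ (m : nat) (t : R) :
  cos (INR m * t) - cos (INR (S m) * t) = 2 * sin (t / 2) * sin ((INR m + 1/2) * t).
Proof.
  replace (INR m * t) with ((INR m + 1/2) * t - t / 2) by field.
  replace (INR (S m) * t) with ((INR m + 1/2) * t + t / 2) by (rewrite S_INR; field).
  rewrite cos_minus, cos_plus. ring.
Qed.

Lemma cos_sub_cos_sum (d L : nat) (t : R) :
  cos (INR d * t) - cos (INR (d + S L) * t) =
  2 * sin (t / 2) * sum_f_R0 (fun i => sin ((INR (d + i) + 1/2) * t)) L.
Proof.
  transitivity (sum_f_R0 (fun i => - cos (INR (d + S i) * t) - - cos (INR (d + i) * t)) L).
  - rewrite (sum_f_R0_telescope (fun i => - cos (INR (d + i) * t))), Nat.add_0_r. ring.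
  - rewrite scal_sum. apply sum_eq. intros i _.
    rewrite Nat.add_succ_r. pose proof (cos_sub_cos_succ (d + i) t). lra.
Qed.

Lemma is_RInt_sin_scal (c : R) : c <> 0 ->
  is_RInt (fun x => sin (c * x)) 0 1 ((1 - cos c) / c).
Proof.
  intros Hc.
  replace ((1 - cos c) / c) with (minus (- cos (c * 1) / c) (- cos (c * 0) / c))
    by (rewrite Rmult_1_r, Rmult_0_r, cos_0; unfold minus, plus, opp; simpl; field; exact Hc).
  apply (is_RInt_derive (fun x => - cos (c * x) / c)).
  - intros x _. auto_derive; [exact I|]. field. exact Hc.
  - intros x _. apply continuous_comp_scal. intros y. apply continuous_sin.
Qed.

Lemma Sjk_sum (j k d L : nat) : INR d = Rabs (INR j - INR k) -> (d + S L = j + k)%nat ->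
  Sjk j k = / PI * sum_f_R0 (fun i => / (INR (d + i) + 1/2)) L.
Proof.
  intros Hd HL. pose proof PI_RGT_0 as Hpi. unfold Sjk. apply is_RInt_unique.
  rewrite scal_sum.
  apply (is_RInt_ext (fun x => sum_f_R0 (fun i => sin ((INR (d + i) + 1/2) * PI * x)) L)).
  - intros x Hx. rewrite Rmin_left, Rmax_right in Hx by lra.
    assert (Hs : 0 < sin (PI * x / 2)) by (apply sin_gt_0; nra).
    rewrite Rmult_assoc, !(Rmult_assoc (INR _) PI x), (sin_mul_sin_INR j k d _ Hd), <- HL,
      cos_sub_cos_sum.
    field_simplify; [| lra]. apply sum_eq. intros i _. now rewrite Rmult_assoc.
  - apply is_RInt_sum_f_R0. intros i.
    replace (/ (INR (d + i) + 1/2) * / PI)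
      with ((1 - cos ((INR (d + i) + 1/2) * PI)) / ((INR (d + i) + 1/2) * PI)).
    + apply is_RInt_sin_scal. pose proof (pos_INR (d + i)). nra.
    + rewrite cos_INR_half_mult_PI. pose proof (pos_INR (d + i)). field. lra.
Qed.

Lemma ln_lt_sum_inv_half (d L : nat) :
  ln (INR (d + S L) + 1/2) - ln (INR d + 1/2) < sum_f_R0 (fun i => / (INR (d + i) + 1/2)) L.
Proof.
  rewrite <- (Nat.add_0_r d) at 2.
  rewrite <- (sum_f_R0_telescope (fun i => ln (INR (d + i) + 1/2))).
  apply sum_f_R0_lt. intros i _. pose proof (pos_INR (d + i)).
  rewrite Nat.add_succ_r, S_INR.
  pose proof (ln_sub_lt_tangent (INR (d + i) + 1/2) (INR (d + i) + 1 + 1/2)) as Htan.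
  replace ((INR (d + i) + 1 + 1/2 - (INR (d + i) + 1/2)) / (INR (d + i) + 1/2))
    with (/ (INR (d + i) + 1/2)) in Htan by (field; lra).
  apply Htan; lra.
Qed.

Lemma sum_inv_half_lt_ln (d L : nat) : (1 <= d)%nat ->
  sum_f_R0 (fun i => / (INR (d + i) + 1/2)) L < ln (INR (d + S L) - 1/2) - ln (INR d - 1/2).
Proof.
  intros Hd. rewrite <- (Nat.add_0_r d) at 2.
  rewrite <- (sum_f_R0_telescope (fun i => ln (INR (d + i) - 1/2))).
  apply sum_f_R0_lt. intros i _. apply le_INR in Hd. pose proof (le_INR d (d + i) ltac:(lia)).
  rewrite Nat.add_succ_r, S_INR. simpl INR in Hd.
  pose proof (ln_sub_lt_tangent (INR (d + i) + 1/2) (INR (d + i) - 1/2)) as Htan.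
  replace ((INR (d + i) - 1/2 - (INR (d + i) + 1/2)) / (INR (d + i) + 1/2))
    with (- / (INR (d + i) + 1/2)) in Htan by (field; lra).
  replace (INR (d + i) + 1 - 1/2) with (INR (d + i) + 1/2) by lra.
  specialize (Htan ltac:(lra) ltac:(lra) ltac:(lra)). lra.
Qed.

Lemma Sjk_gt_ln_ratio (j k : nat) : (1 <= j)%nat -> (1 <= k)%nat ->
  / PI * ln ((INR j + INR k + 1/2) / (Rabs (INR j - INR k) + 1/2)) < Sjk j k.
Proof.
  intros Hj Hk. set (d := nat_dist j k). set (L := (j + k - d - 1)%nat).
  assert (HL : (d + S L = j + k)%nat) by (unfold L, d, nat_dist; lia).
  rewrite (Sjk_sum j k d L (INR_nat_dist j k) HL), <- INR_nat_dist, <- plus_INR, <- HL.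
  fold d.
  pose proof (pos_INR d). pose proof (pos_INR (d + S L)).
  rewrite ln_div by lra.
  apply Rmult_lt_compat_l; [apply Rinv_0_lt_compat, PI_RGT_0 | apply ln_lt_sum_inv_half].
Qed.

Lemma ln_ratio_pos (j k : nat) : (1 <= j)%nat -> (1 <= k)%nat ->
  0 < / PI * ln ((INR j + INR k + 1/2) / (Rabs (INR j - INR k) + 1/2)).
Proof.
  intros Hj Hk. rewrite <- INR_nat_dist, <- plus_INR.
  assert (Hlt : INR (nat_dist j k) < INR (j + k)) by (apply lt_INR; unfold nat_dist; lia).
  pose proof (pos_INR (nat_dist j k)).
  pose proof (ln_increasing (INR (nat_dist j k) + 1/2) (INR (j + k) + 1/2) ltac:(lra) ltac:(lra)).
  apply Rmult_lt_0_compat; [apply Rinv_0_lt_compat, PI_RGT_0|].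
  rewrite ln_div by lra. lra.
Qed.

Lemma Sjk_lt_ln_ratio (j k : nat) : (1 <= j)%nat -> (1 <= k)%nat -> j <> k ->
  Sjk j k < / PI * ln ((INR j + INR k - 1/2) / (Rabs (INR j - INR k) - 1/2)).
Proof.
  intros Hj Hk Hjk. set (d := nat_dist j k). set (L := (j + k - d - 1)%nat).
  assert (HL : (d + S L = j + k)%nat) by (unfold L, d, nat_dist; lia).
  assert (Hd : (1 <= d)%nat) by (unfold d, nat_dist; lia).
  rewrite (Sjk_sum j k d L (INR_nat_dist j k) HL), <- INR_nat_dist, <- plus_INR, <- HL.
  fold d.
  pose proof (le_INR _ _ Hd). pose proof (le_INR d (d + S L) ltac:(lia)). simpl INR in *.
  rewrite ln_div by lra.
  apply Rmult_lt_compat_l; [apply Rinv_0_lt_compat, PI_RGT_0 | now apply sum_inv_half_lt_ln].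
Qed.

Lemma Sjj_lt_ln (j : nat) : (1 <= j)%nat -> Sjk j j < 2 / PI + / PI * ln (4 * INR j - 1).
Proof.
  intros Hj. set (L := (2 * j - 2)%nat).
  assert (Hd : INR 0 = Rabs (INR j - INR j)) by (rewrite Rminus_diag, Rabs_R0; reflexivity).
  rewrite (Sjk_sum j j 0 (S L) Hd) by (unfold L; lia).
  rewrite decomp_sum by lia. simpl pred.
  change (sum_f_R0 (fun i => / (INR (0 + S i) + 1/2)) L)
    with (sum_f_R0 (fun i => / (INR (1 + i) + 1/2)) L).
  pose proof (sum_inv_half_lt_ln 1 L (le_n 1)) as H.
  replace (INR (1 + S L)) with (2 * INR j) in H
    by (replace (1 + S L)%nat with (j + j)%nat by (unfold L; lia); rewrite plus_INR; ring).
  apply le_INR in Hj. simpl INR in *.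
  replace (ln (4 * INR j - 1)) with (ln (2 * INR j - 1/2) - ln (1 - 1/2))
    by (rewrite <- ln_div by lra; f_equal; field).
  pose proof PI_RGT_0. assert (0 < / PI) by (apply Rinv_0_lt_compat; lra).
  replace (/ (0 + 1/2)) with 2 by field. unfold Rdiv at 1. nra.
Qed.

Lemma Sjk_increasing (j n : nat) : (1 <= j)%nat -> (j < n)%nat -> Sjk j n < Sjk (S j) n.
Proof.
  intros Hj Hjn. set (d := (n - S j)%nat). set (L := (2 * j - 1)%nat).
  assert (Hd1 : INR (S d) = Rabs (INR j - INR n)).
  { rewrite <- INR_nat_dist. f_equal. unfold d, nat_dist. lia. }
  assert (Hd2 : INR d = Rabs (INR (S j) - INR n)).
  { rewrite <- INR_nat_dist. f_equal. unfold d, nat_dist. lia. }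
  rewrite (Sjk_sum j n (S d) L Hd1), (Sjk_sum (S j) n d (S (S L)) Hd2) by (unfold d, L; lia).
  rewrite tech5, (decomp_sum _ (S L)) by lia. simpl pred.
  assert (Hshift : sum_f_R0 (fun i => / (INR (d + S i) + 1/2)) L
                   = sum_f_R0 (fun i => / (INR (S d + i) + 1/2)) L).
  { apply sum_eq. intros i _. now rewrite Nat.add_succ_r. }
  rewrite Hshift.
  pose proof PI_RGT_0. assert (0 < / PI) by (apply Rinv_0_lt_compat; lra).
  apply Rmult_lt_compat_l; [assumption|].
  pose proof (pos_INR (d + 0)). pose proof (pos_INR (d + S (S L))).
  assert (0 < / (INR (d + 0) + 1/2)) by (apply Rinv_0_lt_compat; lra).
  assert (0 < / (INR (d + S (S L)) + 1/2)) by (apply Rinv_0_lt_compat; lra).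
  lra.
Qed.

(** * Cosine moments of sin(πx/2)^(1/2) and the R_jk *)

Definition weight (x : R) : R := sqrt (sin (PI * x / 2)).

Definition cos_moment (m : nat) : R := RInt (fun x => weight x * cos (INR m * PI * x)) 0 1.

Lemma continuous_weight (x : R) : continuous weight x.
Proof.
  unfold weight. apply continuous_sqrt_comp.
  apply (continuous_ext (fun y => sin (PI / 2 * y))); [intros y; f_equal; field|].
  apply continuous_comp_scal. intros y. apply continuous_sin.
Qed.

Lemma continuous_cos_moment_integrand (m : nat) (x : R) :
  continuous (fun y => weight y * cos (INR m * PI * y)) x.
Proof.
  apply continuous_Rmult; [apply continuous_weight|].
  apply continuous_comp_scal. intros y. apply continuous_cos.
Qed.

Lemma is_RInt_cos_moment (m : nat) :
  is_RInt (fun x => weight x * cos (INR m * PI * x)) 0 1 (cos_moment m).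
Proof.
  apply (RInt_correct (V := R_CompleteNormedModule)).
  apply (ex_RInt_continuous (V := R_CompleteNormedModule)).
  intros x _. apply continuous_cos_moment_integrand.
Qed.

Lemma weight_pos (x : R) : 0 < x < 1 -> 0 < weight x.
Proof. intros Hx. apply sqrt_lt_R0. pose proof PI_RGT_0. apply sin_gt_0; nra. Qed.

Lemma weight_le_1 (x : R) : weight x <= 1.
Proof. rewrite <- sqrt_1. apply sqrt_le_1_alt, SIN_bound. Qed.

Lemma is_derive_sin_mul_weight (x : R) : 0 <= x <= 1 ->
  is_derive (fun y => sin (PI * y / 2) * weight y) x (3/4 * PI * cos (PI * x / 2) * weight x).
Proof.
  intros Hx. destruct (Req_dec x 0) as [->|Hx0].
  - replace (3/4 * PI * cos (PI * 0 / 2) * weight 0) with (PI / 2 * weight 0)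
      by (unfold weight; rewrite Rmult_0_r, Rdiv_0_l, sin_0, sqrt_0; ring).
    apply is_derive_Reals, derivable_pt_lim_mult_vanishing.
    + rewrite Rmult_0_r, Rdiv_0_l. apply sin_0.
    + apply is_derive_Reals. auto_derive; [exact I|]. rewrite Rmult_0_r, Rmult_0_l, cos_0. field.
    + apply continuity_pt_filterlim, continuous_weight.
  - assert (Hs : 0 < sin (PI * x / 2)) by (pose proof PI_RGT_0; apply sin_gt_0; nra).
    unfold weight. auto_derive; [lra|]. change (PI * x * / 2) with (PI * x / 2).
    set (q := sqrt (sin (PI * x / 2))).
    assert (Hq : sin (PI * x / 2) = q * q) by (symmetry; apply sqrt_sqrt; lra).
    assert (0 < q) by (apply sqrt_lt_R0; lra).
    rewrite Hq. field. lra.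
Qed.

Lemma is_derive_cos_moment_primitive (m : nat) (x : R) : 0 <= x <= 1 ->
  is_derive (fun y => sin (PI * y / 2) * weight y * cos ((INR m + 1/2) * PI * y)) x
    (PI / 2 * ((INR m + 5/4) * (weight x * cos (INR (S m) * PI * x))
               + (1/4 - INR m) * (weight x * cos (INR m * PI * x)))).
Proof.
  intros Hx. set (w := (INR m + 1/2) * PI).
  assert (Hcos : is_derive (fun y => cos (w * y)) x (- w * sin (w * x)))
    by (auto_derive; [exact I | ring]).
  pose proof (is_derive_mult _ _ _ _ _ (is_derive_sin_mul_weight x Hx) Hcos Rmult_comm) as H.
  match type of H with is_derive _ _ ?v => replace (PI / 2 * _) with v end; [exact H|].
  unfold w. rewrite S_INR. unfold plus, mult; simpl.
  replace ((INR m + 1) * PI * x) with ((INR m + 1/2) * PI * x + PI * x / 2) by field.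
  replace (INR m * PI * x) with ((INR m + 1/2) * PI * x - PI * x / 2) by field.
  rewrite cos_plus, cos_minus. field.
Qed.

Lemma cos_moment_rec (m : nat) :
  (INR m + 5/4) * cos_moment (S m) = (INR m - 1/4) * cos_moment m.
Proof.
  set (F := fun x => sin (PI * x / 2) * weight x * cos ((INR m + 1/2) * PI * x)).
  set (dF := fun x => PI / 2 * ((INR m + 5/4) * (weight x * cos (INR (S m) * PI * x))
                               + (1/4 - INR m) * (weight x * cos (INR m * PI * x)))).
  assert (HdF : forall x, Rmin 0 1 <= x <= Rmax 0 1 -> is_derive F x (dF x)).
  { intros x Hx. rewrite Rmin_left, Rmax_right in Hx by lra.
    exact (is_derive_cos_moment_primitive m x Hx). }
  assert (HdF_cont : forall x, Rmin 0 1 <= x <= Rmax 0 1 -> continuous dF x).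
  { intros x _. apply continuous_Rmult; [apply continuous_const|].
    apply continuous_Rplus; apply continuous_Rmult;
      (apply continuous_const || apply continuous_cos_moment_integrand). }
  assert (Hends : minus (F 1) (F 0) = 0).
  { unfold F. rewrite !Rmult_1_r, !Rmult_0_r, cos_INR_half_mult_PI, Rdiv_0_l, sin_0.
    unfold minus, plus, opp; simpl. ring. }
  assert (HdF_int : is_RInt dF 0 1
            (PI / 2 * ((INR m + 5/4) * cos_moment (S m) + (1/4 - INR m) * cos_moment m))).
  { apply (is_RInt_scal (V := R_NormedModule)).
    apply (is_RInt_plus (V := R_NormedModule)); apply (is_RInt_scal (V := R_NormedModule));
      apply is_RInt_cos_moment. }
  assert (HFTC : RInt dF 0 1 = 0).
  { etransitivity; [|exact Hends].
    exact (is_RInt_unique _ _ _ _ (is_RInt_derive F dF 0 1 HdF HdF_cont)). }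
  rewrite (is_RInt_unique _ _ _ _ HdF_int) in HFTC.
  pose proof PI_RGT_0. nra.
Qed.

Lemma cos_moment_0_pos : 0 < cos_moment 0.
Proof.
  apply RInt_gt_0; [lra| |].
  - intros x Hx. rewrite Rmult_0_l, Rmult_0_l, cos_0, Rmult_1_r. now apply weight_pos.
  - intros x _. apply continuous_cos_moment_integrand.
Qed.

Lemma cos_moment_0_le_1 : cos_moment 0 <= 1.
Proof.
  replace 1 with (RInt (fun _ => 1) 0 1) by (rewrite RInt_const; compute; ring).
  apply RInt_le; [lra | eexists; apply is_RInt_cos_moment | apply ex_RInt_const |].
  intros x _. rewrite Rmult_0_l, Rmult_0_l, cos_0, Rmult_1_r. apply weight_le_1.
Qed.

Lemma cos_moment_1 : cos_moment 1 = - cos_moment 0 / 5.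
Proof. pose proof (cos_moment_rec 0) as H. simpl INR in H. lra. Qed.

Lemma cos_moment_neg (m : nat) : (1 <= m)%nat -> cos_moment m < 0.
Proof.
  induction m as [|m IH]; intros Hm; [lia|].
  destruct (Nat.eq_dec m 0) as [->|Hm0].
  - rewrite cos_moment_1. pose proof cos_moment_0_pos. lra.
  - specialize (IH ltac:(lia)). pose proof (cos_moment_rec m) as H.
    assert (1 <= INR m) by (apply (le_INR 1); lia). nra.
Qed.

Lemma cos_moment_lt_succ (m : nat) : (1 <= m)%nat -> cos_moment m < cos_moment (S m).
Proof.
  intros Hm. pose proof (cos_moment_rec m). pose proof (cos_moment_neg m Hm).
  pose proof (pos_INR m). nra.
Qed.

Lemma cos_moment_increasing (a b : nat) : (1 <= a)%nat -> (a < b)%nat ->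
  cos_moment a < cos_moment b.
Proof.
  intros Ha. induction b as [|b IH]; intros Hab; [lia|].
  destruct (Nat.eq_dec a b) as [->|Hne]; [now apply cos_moment_lt_succ|].
  apply Rlt_trans with (cos_moment b); [apply IH; lia | apply cos_moment_lt_succ; lia].
Qed.

Lemma cos_moment_bounds (m : nat) : - (1/5) <= cos_moment m <= 1.
Proof.
  pose proof cos_moment_0_pos. pose proof cos_moment_0_le_1. pose proof cos_moment_1.
  destruct m as [|[|m]]; [lra | lra |].
  pose proof (cos_moment_increasing 1 (S (S m)) ltac:(lia) ltac:(lia)).
  pose proof (cos_moment_neg (S (S m)) ltac:(lia)). lra.
Qed.

Lemma cos_moment_partial_sum (N : nat) :
  cos_moment 0 + 2 * sum_f_R0 (fun i => cos_moment (S i)) N = - (4 * INR N + 3) * cos_moment (S N).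
Proof.
  induction N as [|N IH].
  - simpl. pose proof cos_moment_1. lra.
  - rewrite tech5. pose proof (cos_moment_rec (S N)). rewrite S_INR in *. lra.
Qed.

Lemma Rpower_2_3_2 : Rpower 2 (3/2) = 2 * sqrt 2.
Proof.
  replace (3/2) with (1 + /2) by field.
  rewrite Rpower_plus, Rpower_1, Rpower_sqrt; lra.
Qed.

Lemma Rjk_cos_moment (j k d : nat) : INR d = Rabs (INR j - INR k) ->
  Rjk j k = sqrt 2 * (cos_moment d - cos_moment (j + k)).
Proof.
  intros Hd. unfold Rjk. rewrite Rpower_2_3_2.
  replace (RInt _ 0 1) with (/ 2 * (cos_moment d - cos_moment (j + k))); [field|].
  symmetry. apply is_RInt_unique.
  apply (is_RInt_ext (fun x => / 2 * (weight x * cos (INR d * PI * x)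
                                      - weight x * cos (INR (j + k) * PI * x)))).
  - intros x _. simpl. unfold weight.
    rewrite (Rmult_assoc (sqrt _)), !(Rmult_assoc (INR _) PI x), (sin_mul_sin_INR j k d _ Hd).
    field.
  - apply (is_RInt_scal (V := R_NormedModule)).
    apply (is_RInt_minus (V := R_NormedModule)); apply is_RInt_cos_moment.
Qed.

Lemma Rjj_pos (j : nat) : (1 <= j)%nat -> 0 < Rjk j j.
Proof.
  intros Hj.
  assert (Hd : INR 0 = Rabs (INR j - INR j)) by (rewrite Rminus_diag, Rabs_R0; reflexivity).
  rewrite (Rjk_cos_moment j j 0 Hd).
  pose proof cos_moment_0_pos. pose proof (cos_moment_neg (j + j) ltac:(lia)).
  apply Rmult_lt_0_compat; [apply sqrt_lt_R0 | ]; lra.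
Qed.

Lemma Rjk_neg (j k : nat) : (1 <= j)%nat -> (1 <= k)%nat -> j <> k -> Rjk j k < 0.
Proof.
  intros Hj Hk Hjk. rewrite (Rjk_cos_moment j k _ (INR_nat_dist j k)).
  pose proof (cos_moment_increasing (nat_dist j k) (j + k)) as H.
  unfold nat_dist in *. specialize (H ltac:(lia) ltac:(lia)).
  pose proof (sqrt_lt_R0 2 ltac:(lra)). nra.
Qed.

Lemma Rabs_Rjk_le (j k : nat) : Rabs (Rjk j k) <= 2 * sqrt 2.
Proof.
  rewrite (Rjk_cos_moment j k _ (INR_nat_dist j k)), Rabs_mult, Rabs_right, (Rmult_comm 2)
    by apply Rle_ge, sqrt_pos.
  apply Rmult_le_compat_l; [apply sqrt_pos|].
  pose proof (cos_moment_bounds (nat_dist j k)). pose proof (cos_moment_bounds (j + k)).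
  apply Rabs_le. lra.
Qed.

Lemma Rjk_succ_pred_lt (n : nat) : (1 <= n)%nat -> Rjk (S n) n < Rjk n (n - 1).
Proof.
  intros Hn.
  assert (H1 : INR 1 = Rabs (INR (S n) - INR n)).
  { rewrite <- INR_nat_dist. f_equal. unfold nat_dist. lia. }
  assert (H2 : INR 1 = Rabs (INR n - INR (n - 1))).
  { rewrite <- INR_nat_dist. f_equal. unfold nat_dist. lia. }
  rewrite (Rjk_cos_moment _ _ 1 H1), (Rjk_cos_moment _ _ 1 H2).
  pose proof (cos_moment_increasing (n + (n - 1)) (S n + n) ltac:(lia) ltac:(lia)).
  apply Rmult_lt_compat_l; [apply sqrt_lt_R0 |]; lra.
Qed.

Lemma sum_Rjk_ge (n : nat) : (2 <= n)%nat ->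
  2 * sum_f_R0 (fun i => Rjk (S i) n) (n - 2) >= - Rjk n n.
Proof.
  intros Hn. set (N := (n - 2)%nat).
  assert (Hsum : sum_f_R0 (fun i => Rjk (S i) n) N =
                 sqrt 2 * (sum_f_R0 (fun i => cos_moment (S i)) N
                           - sum_f_R0 (fun i => cos_moment (S i + n)) N)).
  { rewrite <- (sum_f_R0_skip (fun i => cos_moment (S i)) N), <- minus_sum, scal_sum.
    apply sum_eq. intros i Hi. rewrite Rmult_comm. apply Rjk_cos_moment.
    rewrite <- INR_nat_dist. f_equal. unfold nat_dist, N in *. lia. }
  assert (Hd : INR 0 = Rabs (INR n - INR n)) by (rewrite Rminus_diag, Rabs_R0; reflexivity).
  rewrite Hsum, (Rjk_cos_moment n n 0 Hd).
  assert (Hlow : 0 < cos_moment 0 + 2 * sum_f_R0 (fun i => cos_moment (S i)) N).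
  { rewrite cos_moment_partial_sum. pose proof (cos_moment_neg (S N) ltac:(lia)).
    pose proof (pos_INR N). nra. }
  assert (Hhigh : sum_f_R0 (fun i => cos_moment (S i + n)) N < 0).
  { pose proof (sum_f_R0_lt (fun i => cos_moment (S i + n)) (fun _ => 0) N) as H.
    rewrite sum_cte, Rmult_0_l in H. apply H. intros i _. apply cos_moment_neg. lia. }
  pose proof (cos_moment_neg (n + n) ltac:(lia)).
  pose proof (sqrt_lt_R0 2 ltac:(lra)). nra.
Qed.

Theorem lemma3p6 :
  forall n : nat, (2 <= n)%nat ->
  (forall j k : nat, (1 <= j <= n)%nat -> (1 <= k <= n)%nat ->
     (* (i) *)
     (0 < Rjk j j /\ (j <> k -> Rjk j k < 0) /\ Rabs (Rjk j k) <= 2 * sqrt 2) /\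
     (* (iv) *)
     (/ PI * ln ((INR j + INR k + 1/2) / (Rabs (INR j - INR k) + 1/2)) < Sjk j k /\
      0 < / PI * ln ((INR j + INR k + 1/2) / (Rabs (INR j - INR k) + 1/2))) /\
     (* (v) *)
     ((j <> k -> Sjk j k < / PI * ln ((INR j + INR k - 1/2) / (Rabs (INR j - INR k) - 1/2))) /\
      Sjk j j < 2 / PI + / PI * ln (4 * INR j - 1))) /\
  (* (ii) R_{n,n-1} decreasing in n >= 2 *)
  Rjk (S n) n < Rjk n (n - 1) /\
  (* (iii) 2 * sum_{k=1}^{n-1} R_{kn} >= - R_{nn} *)
  2 * sum_f_R0 (fun i => Rjk (S i) n) (n - 2) >= - Rjk n n /\
  (* (vi) S_{jn} increasing in j, 1 <= j <= n *)
  (forall j : nat, (1 <= j)%nat -> (j < n)%nat -> Sjk j n < Sjk (S j) n).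
Proof.
  intros n Hn. split; [| split; [| split]].
  - intros j k [Hj _] [Hk _]. repeat split.
    + now apply Rjj_pos.
    + now apply Rjk_neg.
    + apply Rabs_Rjk_le.
    + now apply Sjk_gt_ln_ratio.
    + now apply ln_ratio_pos.
    + now apply Sjk_lt_ln_ratio.
    + now apply Sjj_lt_ln.
  - apply Rjk_succ_pred_lt. lia.
  - now apply sum_Rjk_ge.
  - intros j Hj Hjn. now apply Sjk_increasing.
Qed.
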